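(* Let $m\ge 2$ and $c\ge 1$. Then the best-worst rule $s=(c,m)$ admits no non-convergent Nash equilibrium.
   Context: Setting: voters' ideal points are distributed uniformly (unit mass, Lebesgue measure) on the issue space $[0,1]$. There are $m\ge 2$ candidates; a profile is $x=(x_1,\dots,x_m)\in[0,1]^m$, where $x_i$ is the platform of candidate $i$. A voter with ideal point $y$ ranks candidates by distance $|x_i-y|$ (closer is better); ties are broken by a fair lottery (uniformly random strict order among tied candidates). Fix $c\ge 0$. Under the best-worst rule $s=(c,m)$, a candidate receives $1$ point from each voter ranking her first, $-c$ points from each voter ranking her last ($m$-th), and $0$ otherwise. Candidate $i$'s score $v_i(x)$ is the expected total number of points received. A (pure-strategy Nash) equilibrium is a profile $x^*$ with $v_i(x^* )\ge v_i(t,x^*_{-i})$ for all $i$ and $t\in[0,1]$, where $(t,x_{-i})$ denotes $x$ with $x_i$ replaced by $t$. A non-convergent Nash equilibrium (NCNE) is an equilibrium in which at least two platforms are distinct. *)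

From Stdlib Require Import Reals Lra Lia List ClassicalEpsilon.
Import ListNotations.
Open Scope R_scope.

(* A profile of m candidates is a function x : nat -> R; only the values
   x 0, ..., x (m-1) are meaningful. *)

(* Integral over [0,1] of f (Riemann integral; 0 if f is not integrable,
   which never happens for the piecewise-constant integrands below). *)
Definition integral01 (f : R -> R) : R :=
  match excluded_middle_informative
          (exists v, exists pr : Riemann_integrable f 0 1, RiemannInt pr = v) with
  | left H => proj1_sig (constructive_indefinite_description _ H)
  | right _ => 0
  end.

Definition dist (x : nat -> R) (j : nat) (y : R) : R := Rabs (x j - y).

Definition min_dist (m : nat) (x : nat -> R) (y : R) : R :=
  fold_right Rmin (dist x 0 y) (map (fun j => dist x j y) (seq 0 m)).
Definition max_dist (m : nat) (x : nat -> R) (y : R) : R :=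
  fold_right Rmax (dist x 0 y) (map (fun j => dist x j y) (seq 0 m)).

Definition n_at (m : nat) (x : nat -> R) (y d : R) : nat :=
  length (filter (fun j => if Req_EM_T (dist x j y) d then true else false)
                 (seq 0 m)).

(* probability (under the fair tie-breaking lottery) that voter y ranks
   candidate i first, resp. last (m-th) *)
Definition p_first (m : nat) (x : nat -> R) (i : nat) (y : R) : R :=
  if Req_EM_T (dist x i y) (min_dist m x y)
  then / INR (n_at m x y (min_dist m x y)) else 0.
Definition p_last (m : nat) (x : nat -> R) (i : nat) (y : R) : R :=
  if Req_EM_T (dist x i y) (max_dist m x y)
  then / INR (n_at m x y (max_dist m x y)) else 0.

(* score of candidate i under the best-worst rule s = (c, m):
   expected total points, voters uniform on [0,1] *)
Definition score (m : nat) (c : R) (x : nat -> R) (i : nat) : R :=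
  integral01 (fun y => p_first m x i y - c * p_last m x i y).

Definition update (x : nat -> R) (i : nat) (t : R) : nat -> R :=
  fun j => if Nat.eq_dec j i then t else x j.

Definition is_profile (m : nat) (x : nat -> R) : Prop :=
  forall j, (j < m)%nat -> 0 <= x j <= 1.

Definition is_equilibrium (m : nat) (c : R) (x : nat -> R) : Prop :=
  is_profile m x /\
  forall i t, (i < m)%nat -> 0 <= t <= 1 ->
    score m c (update x i t) i <= score m c x i.

Definition is_NCNE (m : nat) (c : R) (x : nat -> R) : Prop :=
  is_equilibrium m c x /\
  exists i j, (i < m)%nat /\ (j < m)%nat /\ x i <> x j.

From Pilot Require Import Defs.
From Stdlib Require Import Reals Lra Lia List Bool Classical ClassicalEpsilon.
From Coquelicot Require Import Coquelicot.
Import ListNotations.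
Open Scope R_scope.

(* Each voter hands out 1 point for first place and -c for last place, so the
   scores always sum to 1 - c <= 0.  A candidate facing two rivals at distinct
   platforms can move into an empty gap right next to one of them: she is then
   never ranked last and is strictly first for a set of voters of positive
   measure, so her equilibrium score is positive.  A candidate whose rivals all
   share one platform can join them and obtain (1 - c)/m.  So in an equilibrium
   every score is at least (1 - c)/m; if m >= 3 and two platforms differ, some
   candidate faces two distinct rivals and scores strictly more, and the scores
   sum to more than 1 - c.  If m = 2, moving both candidates to the midpoint of
   their platforms would jointly beat 1 - c. *)

(** * Integration *)

Lemma integral01_RInt (f : R -> R) : ex_RInt f 0 1 -> integral01 f = RInt f 0 1.
Proof.
  intros Hf. unfold integral01.
  destruct excluded_middle_informative as [Hex|Hnex].
  - destruct constructive_indefinite_description as [v [pr Hv]]; simpl.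
    rewrite <- Hv, <- RInt_Reals. reflexivity.
  - exfalso; apply Hnex. exists (RInt f 0 1), (ex_RInt_Reals_0 _ _ _ Hf).
    rewrite <- RInt_Reals. reflexivity.
Qed.

Lemma ex_RInt_piecewise_constant (f : R -> R) (L : list R) : forall a b, a < b ->
  (forall y z, a < y -> y <= z -> z < b ->
     (forall p, In p L -> ~ (y <= p <= z)) -> f y = f z) ->
  ex_RInt f a b.
Proof.
  induction L as [|p L IH]; intros a b Hab Hf.
  - apply (ex_RInt_ext (fun _ => f ((a + b) / 2))); [|apply ex_RInt_const].
    intros y Hy. rewrite Rmin_left, Rmax_right in Hy by lra.
    destruct (Rle_dec y ((a + b) / 2)); [symmetry|]; apply Hf;
      solve [lra | intros ? []].
  - assert (Hpiece : forall u v, a <= u -> u < v -> v <= b -> p <= u \/ v <= p ->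
                       ex_RInt f u v).
    { intros u v Hu Huv Hv Hp. apply IH; [lra|]. intros y z Hy Hyz Hz Hnone.
      apply Hf; try lra. intros q [<-|Hq]; [lra|auto]. }
    destruct (Rlt_dec a p); [destruct (Rlt_dec p b)|].
    + apply ex_RInt_Chasles with p; apply Hpiece; lra.
    + apply Hpiece; lra.
    + apply Hpiece; lra.
Qed.

Lemma RInt_unit_gt (h : R -> R) (A d u v : R) :
  ex_RInt h 0 1 -> 0 <= u -> u < v -> v <= 1 -> 0 < d ->
  (forall y, 0 <= y <= 1 -> A <= h y) -> (forall y, u <= y <= v -> A + d <= h y) ->
  A < RInt h 0 1.
Proof.
  intros Hi Hu Huv Hv Hd Hlow Hbump.
  assert (I1 : ex_RInt h 0 u)
    by (apply (@ex_RInt_Chasles_1 R_CompleteNormedModule) with 1; auto; lra).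
  assert (I2 : ex_RInt h u 1)
    by (apply (@ex_RInt_Chasles_2 R_CompleteNormedModule) with 0; auto; lra).
  assert (I3 : ex_RInt h u v)
    by (apply (@ex_RInt_Chasles_1 R_CompleteNormedModule) with 1; auto; lra).
  assert (I4 : ex_RInt h v 1)
    by (apply (@ex_RInt_Chasles_2 R_CompleteNormedModule) with u; auto; lra).
  rewrite <- (RInt_Chasles h 0 u 1), <- (RInt_Chasles h u v 1) by auto.
  assert (B1 : RInt (fun _ => A) 0 u <= RInt h 0 u).
  { apply RInt_le; auto. apply ex_RInt_const. intros; apply Hlow; lra. }
  assert (B2 : RInt (fun _ => A + d) u v <= RInt h u v).
  { apply RInt_le; auto; try lra. apply ex_RInt_const. intros; apply Hbump; lra. }
  assert (B3 : RInt (fun _ => A) v 1 <= RInt h v 1).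
  { apply RInt_le; auto. apply ex_RInt_const. intros; apply Hlow; lra. }
  rewrite !RInt_const in B1, B2, B3. unfold scal, plus, mult in *; simpl in *.
  unfold mult in *; simpl in *. nra.
Qed.

Fixpoint Rsum_over (f : nat -> R) (l : list nat) : R :=
  match l with [] => 0 | i :: l' => f i + Rsum_over f l' end.

Lemma Rsum_over_ext (f g : nat -> R) (l : list nat) :
  (forall i, In i l -> f i = g i) -> Rsum_over f l = Rsum_over g l.
Proof. induction l; simpl; intros H; auto. rewrite H, IHl; auto. Qed.

Lemma Rsum_over_lin (c : R) (f g : nat -> R) (l : list nat) :
  Rsum_over (fun i => f i - c * g i) l = Rsum_over f l - c * Rsum_over g l.
Proof. induction l; simpl; lra. Qed.

Lemma Rsum_over_indicator (g : nat -> R) (d r : R) (l : list nat) :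
  Rsum_over (fun i => if Req_EM_T (g i) d then r else 0) l =
  INR (length (filter (fun j => if Req_EM_T (g j) d then true else false) l)) * r.
Proof.
  induction l; simpl; [lra|].
  destruct Req_EM_T; rewrite IHl; [cbn [length]; rewrite S_INR|]; lra.
Qed.

Lemma Rsum_over_ge (f : nat -> R) (b : R) (l : list nat) :
  (forall i, In i l -> b <= f i) -> INR (length l) * b <= Rsum_over f l.
Proof.
  induction l as [|a l IH]; intros H; cbn [length Rsum_over]; [simpl; lra|].
  rewrite S_INR. pose proof (H a (or_introl eq_refl)).
  assert (INR (length l) * b <= Rsum_over f l) by (apply IH; intros; apply H; right; auto).
  lra.
Qed.

Lemma Rsum_over_gt (f : nat -> R) (b : R) (l : list nat) (k : nat) :
  (forall i, In i l -> b <= f i) -> In k l -> b < f k -> INR (length l) * b < Rsum_over f l.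
Proof.
  induction l as [|a l IH]; intros H Hk Hfk; [destruct Hk|].
  cbn [length Rsum_over]; rewrite S_INR.
  destruct Hk as [<-|Hk].
  - assert (INR (length l) * b <= Rsum_over f l)
      by (apply Rsum_over_ge; intros; apply H; right; auto).
    lra.
  - pose proof (H a (or_introl eq_refl)).
    assert (INR (length l) * b < Rsum_over f l) by (apply IH; auto; intros; apply H; right; auto).
    lra.
Qed.

Lemma Rsum_over_RInt (G : nat -> R -> R) (a b : R) (l : list nat) :
  (forall i, In i l -> ex_RInt (G i) a b) ->
  ex_RInt (fun y => Rsum_over (fun i => G i y) l) a b /\
  RInt (fun y => Rsum_over (fun i => G i y) l) a b = Rsum_over (fun i => RInt (G i) a b) l.
Proof.
  induction l as [|i l IH]; intros H; simpl.
  - split; [apply ex_RInt_const|]. rewrite RInt_const.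
    unfold scal; simpl; unfold mult; simpl; ring.
  - destruct IH as [IH1 IH2]; [intros; apply H; right; auto|].
    assert (Hi : ex_RInt (G i) a b) by (apply H; left; auto).
    split.
    + apply (ex_RInt_plus (G i) (fun y => Rsum_over (fun i => G i y) l)); auto.
    + rewrite <- IH2. apply (RInt_plus (G i) (fun y => Rsum_over (fun i => G i y) l)); auto.
Qed.

(** * Sharing first place under a fair lottery *)

Definition min_val (m : nat) (g : nat -> R) : R :=
  fold_right Rmin (g 0%nat) (map g (seq 0 m)).

Definition is_minb (m : nat) (g : nat -> R) (j : nat) : bool :=
  if Req_EM_T (g j) (min_val m g) then true else false.

(* p_first and p_last are both of this form, the latter for the negated distances. *)
Definition min_share (m : nat) (g : nat -> R) (i : nat) : R :=
  if Req_EM_T (g i) (min_val m g)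
  then / INR (length (filter (is_minb m g) (seq 0 m))) else 0.

Lemma fold_Rmin_le (g : nat -> R) (d : R) (l : list nat) (j : nat) :
  In j l -> fold_right Rmin d (map g l) <= g j.
Proof.
  induction l; simpl; intros H; [destruct H|].
  destruct H as [<-|H]; [apply Rmin_l|]. eapply Rle_trans; [apply Rmin_r|auto].
Qed.

Lemma fold_Rmin_attained (g : nat -> R) (d : R) (l : list nat) :
  fold_right Rmin d (map g l) = d \/ exists j, In j l /\ fold_right Rmin d (map g l) = g j.
Proof.
  induction l as [|a l IH]; simpl; auto.
  destruct (Rle_dec (g a) (fold_right Rmin d (map g l))).
  - right; exists a; split; auto. apply Rmin_left; auto.
  - rewrite Rmin_right by lra. destruct IH as [H|[j [Hj H]]]; auto.
    right; exists j; auto.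
Qed.

Lemma fold_Rmax_opp (g : nat -> R) (d : R) (l : list nat) :
  fold_right Rmax d (map g l) = - fold_right Rmin (- d) (map (fun j => - g j) l).
Proof.
  induction l; simpl; [lra|]. rewrite IHl, Ropp_Rmin, !Ropp_involutive. reflexivity.
Qed.

Lemma min_val_le (m : nat) (g : nat -> R) (j : nat) : (j < m)%nat -> min_val m g <= g j.
Proof. intros Hj. apply fold_Rmin_le, in_seq; lia. Qed.

Lemma min_val_attained (m : nat) (g : nat -> R) :
  (0 < m)%nat -> exists j, (j < m)%nat /\ g j = min_val m g.
Proof.
  intros Hm. unfold min_val.
  destruct (fold_Rmin_attained g (g 0%nat) (seq 0 m)) as [E|[j [Hj E]]].
  - exists 0%nat; auto.
  - apply in_seq in Hj. exists j; split; [lia|auto].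
Qed.

Lemma min_val_spec (m : nat) (g : nat -> R) (i : nat) : (i < m)%nat ->
  g i = min_val m g <-> forall j, (j < m)%nat -> g i <= g j.
Proof.
  intros Hi; split.
  - intros E j Hj. rewrite E. apply min_val_le; auto.
  - intros H. destruct (min_val_attained m g) as [j [Hj E]]; [lia|].
    apply Rle_antisym; [rewrite <- E; auto|apply min_val_le; auto].
Qed.

Lemma is_minb_spec (m : nat) (g : nat -> R) (j : nat) : (j < m)%nat ->
  is_minb m g j = true <-> forall k, (k < m)%nat -> g j <= g k.
Proof.
  intros Hj. rewrite <- min_val_spec by auto. unfold is_minb.
  destruct Req_EM_T; split; congruence.
Qed.

Lemma min_share_is_minb (m : nat) (g : nat -> R) (i : nat) :
  min_share m g i =
  if is_minb m g i then / INR (length (filter (is_minb m g) (seq 0 m))) else 0.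
Proof.
  unfold min_share. destruct (is_minb m g i) eqn:E; unfold is_minb in E;
    destruct Req_EM_T; congruence.
Qed.

Lemma min_share_nonneg (m : nat) (g : nat -> R) (i : nat) : 0 <= min_share m g i.
Proof.
  unfold min_share. destruct Req_EM_T; [|lra].
  destruct (length _); [simpl; rewrite Rinv_0; lra|].
  apply Rlt_le, Rinv_0_lt_compat, lt_0_INR; lia.
Qed.

Lemma min_share_eq0 (m : nat) (g : nat -> R) (i j : nat) :
  (j < m)%nat -> g j < g i -> min_share m g i = 0.
Proof.
  intros Hj Hlt. unfold min_share. destruct Req_EM_T; auto.
  pose proof (min_val_le m g j Hj). lra.
Qed.

Lemma min_share_sum (m : nat) (g : nat -> R) :
  (0 < m)%nat -> Rsum_over (min_share m g) (seq 0 m) = 1.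
Proof.
  intros Hm. unfold min_share. rewrite Rsum_over_indicator.
  destruct (min_val_attained m g Hm) as [j [Hj E]].
  assert (Hin : In j (filter (is_minb m g) (seq 0 m))).
  { apply filter_In; split; [apply in_seq; lia|]. unfold is_minb.
    destruct Req_EM_T; congruence. }
  apply Rinv_r, not_0_INR. destruct (filter _ _); [destruct Hin|discriminate].
Qed.

Lemma min_share_unique (m : nat) (g : nat -> R) (i : nat) : (i < m)%nat ->
  (forall j, (j < m)%nat -> j <> i -> g i < g j) -> min_share m g i = 1.
Proof.
  intros Hi Hstrict.
  assert (Hmin : is_minb m g i = true).
  { apply is_minb_spec; auto. intros j Hj.
    destruct (Nat.eq_dec j i) as [->|ne]; [lra|]. apply Rlt_le, Hstrict; auto. }
  assert (Hin : In i (filter (is_minb m g) (seq 0 m)))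
    by (apply filter_In; split; [apply in_seq; lia|auto]).
  assert (Hle : (length (filter (is_minb m g) (seq 0 m)) <= length [i])%nat).
  { apply NoDup_incl_length; [apply NoDup_filter, seq_NoDup|].
    intros j Hj. apply filter_In in Hj as [Hj Hjmin]. apply in_seq in Hj.
    destruct (Nat.eq_dec j i) as [->|ne]; [left; auto|exfalso].
    pose proof (proj1 (is_minb_spec m g j ltac:(lia)) Hjmin i Hi).
    specialize (Hstrict j ltac:(lia) ne). lra. }
  rewrite min_share_is_minb, Hmin.
  destruct (filter _ _) as [|a [|b l]]; [destruct Hin|simpl; lra|simpl in Hle; lia].
Qed.

Lemma min_share_const (m : nat) (g : nat -> R) (i : nat) : (i < m)%nat ->
  (forall j, (j < m)%nat -> g j = g i) -> min_share m g i = / INR m.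
Proof.
  intros Hi Hconst.
  assert (Hall : forall j, (j < m)%nat -> is_minb m g j = true).
  { intros j Hj. apply is_minb_spec; auto. intros k Hk.
    rewrite (Hconst j Hj), (Hconst k Hk). lra. }
  rewrite min_share_is_minb, Hall, forallb_filter_id, length_seq; auto.
  apply forallb_forall. intros j Hj. apply in_seq in Hj. apply Hall; lia.
Qed.

Lemma min_share_order_invariant (m : nat) (g h : nat -> R) (i : nat) : (i < m)%nat ->
  (forall j k, (j < m)%nat -> (k < m)%nat -> g j <= g k <-> h j <= h k) ->
  min_share m g i = min_share m h i.
Proof.
  intros Hi Hord.
  assert (Hb : forall j, (j < m)%nat -> is_minb m g j = is_minb m h j).
  { intros j Hj. apply eq_true_iff_eq.
    rewrite !is_minb_spec by auto. split; intros H k Hk; apply (Hord j k); auto. }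
  rewrite !min_share_is_minb, Hb by auto.
  erewrite filter_ext_in; [reflexivity|]. intros j Hj. apply Hb. apply in_seq in Hj; lia.
Qed.

(** * Voters' rankings *)

Definition payoff (m : nat) (c : R) (x : nat -> R) (i : nat) (y : R) : R :=
  p_first m x i y - c * p_last m x i y.

Lemma p_first_min_share (m : nat) (x : nat -> R) (i : nat) (y : R) :
  p_first m x i y = min_share m (fun j => Defs.dist x j y) i.
Proof. reflexivity. Qed.

Lemma Req_EM_T_opp {A : Type} (a b : R) (u v : A) :
  (if Req_EM_T a (- b) then u else v) = (if Req_EM_T (- a) b then u else v).
Proof. destruct (Req_EM_T a (- b)), (Req_EM_T (- a) b); auto; exfalso; lra. Qed.

Lemma p_last_min_share (m : nat) (x : nat -> R) (i : nat) (y : R) :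
  p_last m x i y = min_share m (fun j => - Defs.dist x j y) i.
Proof.
  assert (Hmax : max_dist m x y = - min_val m (fun j => - Defs.dist x j y))
    by apply fold_Rmax_opp.
  unfold p_last, n_at, min_share, is_minb. rewrite Hmax, Req_EM_T_opp.
  erewrite filter_ext; [reflexivity|]. intros j. apply Req_EM_T_opp.
Qed.

Lemma p_first_eq1 (m : nat) (x : nat -> R) (i : nat) (y : R) : (i < m)%nat ->
  (forall j, (j < m)%nat -> j <> i -> Defs.dist x i y < Defs.dist x j y) ->
  p_first m x i y = 1.
Proof. intros. rewrite p_first_min_share. apply min_share_unique; auto. Qed.

Lemma p_last_eq1 (m : nat) (x : nat -> R) (i : nat) (y : R) : (i < m)%nat ->
  (forall j, (j < m)%nat -> j <> i -> Defs.dist x j y < Defs.dist x i y) ->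
  p_last m x i y = 1.
Proof.
  intros Hi H. rewrite p_last_min_share. apply min_share_unique; auto.
  intros j Hj Hji. specialize (H j Hj Hji). lra.
Qed.

Lemma p_first_eq0 (m : nat) (x : nat -> R) (i j : nat) (y : R) : (j < m)%nat ->
  Defs.dist x j y < Defs.dist x i y -> p_first m x i y = 0.
Proof. intros. rewrite p_first_min_share. apply min_share_eq0 with j; auto. Qed.

Lemma p_last_eq0 (m : nat) (x : nat -> R) (i j : nat) (y : R) : (j < m)%nat ->
  Defs.dist x i y < Defs.dist x j y -> p_last m x i y = 0.
Proof. intros. rewrite p_last_min_share. apply min_share_eq0 with j; auto; lra. Qed.

Lemma payoff_first (m : nat) (c : R) (x : nat -> R) (i j : nat) (y : R) :
  (i < m)%nat -> (j < m)%nat -> j <> i ->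
  (forall k, (k < m)%nat -> k <> i -> Defs.dist x i y < Defs.dist x k y) ->
  payoff m c x i y = 1.
Proof.
  intros Hi Hj Hji H. unfold payoff.
  rewrite p_first_eq1, (p_last_eq0 m x i j) by auto. lra.
Qed.

Lemma payoff_last (m : nat) (c : R) (x : nat -> R) (i j : nat) (y : R) :
  (i < m)%nat -> (j < m)%nat -> j <> i ->
  (forall k, (k < m)%nat -> k <> i -> Defs.dist x k y < Defs.dist x i y) ->
  payoff m c x i y = - c.
Proof.
  intros Hi Hj Hji H. unfold payoff.
  rewrite p_last_eq1, (p_first_eq0 m x i j) by auto. lra.
Qed.

Lemma payoff_nonneg_of_not_last (m : nat) (c : R) (x : nat -> R) (i j : nat) (y : R) :
  (j < m)%nat -> Defs.dist x i y < Defs.dist x j y -> 0 <= payoff m c x i y.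
Proof.
  intros Hj H. unfold payoff. rewrite (p_last_eq0 m x i j) by auto.
  pose proof (min_share_nonneg m (fun j => Defs.dist x j y) i). rewrite p_first_min_share. lra.
Qed.

Lemma payoff_tie (m : nat) (c : R) (x : nat -> R) (i : nat) (y : R) : (i < m)%nat ->
  (forall j, (j < m)%nat -> Defs.dist x j y = Defs.dist x i y) ->
  payoff m c x i y = (1 - c) / INR m.
Proof.
  intros Hi H. unfold payoff. rewrite p_first_min_share, p_last_min_share.
  rewrite !min_share_const by (auto; intros j Hj; rewrite H; auto).
  unfold Rdiv. ring.
Qed.

Definition duel_payoff (c a b : R) : R :=
  if Rlt_dec a b then 1 else if Rlt_dec b a then - c else (1 - c) / 2.

Lemma payoff_two (c : R) (z : nat -> R) (i k : nat) (y : R) :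
  (i < 2)%nat -> (k < 2)%nat -> k <> i ->
  payoff 2 c z i y = duel_payoff c (Defs.dist z i y) (Defs.dist z k y).
Proof.
  intros Hi Hk Hki.
  assert (Hother : forall j, (j < 2)%nat -> j <> i -> j = k) by lia.
  unfold duel_payoff. destruct Rlt_dec as [Hlt|Hnlt]; [|destruct Rlt_dec as [Hgt|Hngt]].
  - apply payoff_first with k; auto. intros j Hj Hji. rewrite (Hother j); auto.
  - apply payoff_last with k; auto. intros j Hj Hji. rewrite (Hother j); auto.
  - rewrite payoff_tie; [simpl; lra|auto|]. intros j Hj.
    destruct (Nat.eq_dec j i) as [->|ne]; auto. rewrite (Hother j); auto; lra.
Qed.

(** * Scores *)

Lemma Rabs_le_sqr (a b : R) : Rabs a <= Rabs b <-> a * a <= b * b.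
Proof. unfold Rabs; destruct Rcase_abs; destruct Rcase_abs; split; intros; nra. Qed.

Lemma Rabs_lt_sqr (a b : R) : Rabs a < Rabs b <-> a * a < b * b.
Proof. unfold Rabs; destruct Rcase_abs; destruct Rcase_abs; split; intros; nra. Qed.

Lemma Rabs_compare_same_side (A B y z : R) : y <= z -> ~ (y <= (A + B) / 2 <= z) ->
  Rabs (A - y) <= Rabs (B - y) <-> Rabs (A - z) <= Rabs (B - z).
Proof.
  intros Hyz Hmid. rewrite !Rabs_le_sqr.
  destruct (Rlt_dec ((A + B) / 2) y).
  - split; intros; nra.
  - assert (z < (A + B) / 2) by lra. split; intros; nra.
Qed.

Definition midpoints (m : nat) (x : nat -> R) : list R :=
  flat_map (fun j => map (fun k => (x j + x k) / 2) (seq 0 m)) (seq 0 m).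

Lemma midpoints_In (m : nat) (x : nat -> R) (j k : nat) :
  (j < m)%nat -> (k < m)%nat -> In ((x j + x k) / 2) (midpoints m x).
Proof.
  intros Hj Hk. apply in_flat_map. exists j; split; [apply in_seq; lia|].
  apply in_map_iff. exists k; split; auto. apply in_seq; lia.
Qed.

(* Between two consecutive midpoints every voter ranks the candidates alike. *)
Lemma ex_RInt_payoff (m : nat) (c : R) (x : nat -> R) (i : nat) :
  (i < m)%nat -> ex_RInt (payoff m c x i) 0 1.
Proof.
  intros Hi. apply (ex_RInt_piecewise_constant _ (midpoints m x)); [lra|].
  intros y z _ Hyz _ Hnone.
  assert (Hord : forall j k, (j < m)%nat -> (k < m)%nat ->
            Defs.dist x j y <= Defs.dist x k y <-> Defs.dist x j z <= Defs.dist x k z).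
  { intros j k Hj Hk. apply Rabs_compare_same_side; auto. apply Hnone, midpoints_In; auto. }
  unfold payoff. rewrite !p_first_min_share, !p_last_min_share.
  rewrite (min_share_order_invariant m (fun j => Defs.dist x j y) (fun j => Defs.dist x j z)),
    (min_share_order_invariant m (fun j => - Defs.dist x j y) (fun j => - Defs.dist x j z));
    auto.
  intros j k Hj Hk. specialize (Hord k j Hk Hj). lra.
Qed.

Lemma score_RInt (m : nat) (c : R) (x : nat -> R) (i : nat) :
  (i < m)%nat -> score m c x i = RInt (payoff m c x i) 0 1.
Proof. intros Hi. apply integral01_RInt, ex_RInt_payoff; auto. Qed.

Lemma sum_scores (m : nat) (c : R) (x : nat -> R) :
  (0 < m)%nat -> Rsum_over (score m c x) (seq 0 m) = 1 - c.
Proof.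
  intros Hm.
  rewrite (Rsum_over_ext _ (fun i => RInt (payoff m c x i) 0 1))
    by (intros i Hi; apply score_RInt; apply in_seq in Hi; lia).
  destruct (Rsum_over_RInt (payoff m c x) 0 1 (seq 0 m)) as [_ <-].
  { intros i Hi. apply ex_RInt_payoff. apply in_seq in Hi; lia. }
  rewrite (RInt_ext _ (fun _ => 1 - c)).
  - rewrite RInt_const. unfold scal; simpl; unfold mult; simpl. ring.
  - intros y _. unfold payoff. rewrite Rsum_over_lin.
    assert (Hfirst : Rsum_over (fun i => p_first m x i y) (seq 0 m) = 1)
      by exact (min_share_sum m _ Hm).
    assert (Hlast : Rsum_over (fun i => p_last m x i y) (seq 0 m) = 1).
    { rewrite (Rsum_over_ext _ (min_share m (fun j => - Defs.dist x j y)));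
        [apply min_share_sum; auto|].
      intros i _. apply p_last_min_share. }
    rewrite Hfirst, Hlast. lra.
Qed.

(** * Profitable deviations *)

Lemma update_same (x : nat -> R) (i : nat) (t : R) : update x i t i = t.
Proof. unfold update; destruct Nat.eq_dec; congruence. Qed.

Lemma update_other (x : nat -> R) (i : nat) (t : R) (j : nat) :
  j <> i -> update x i t j = x j.
Proof. unfold update; destruct Nat.eq_dec; congruence. Qed.

Lemma exists_empty_gap (L : list R) (a b : R) :
  a < b -> exists s, a < s <= b /\ forall p, In p L -> ~ (a < p < s).
Proof.
  induction L as [|p L IH]; intros H.
  - exists b; split; [lra|]. intros p [].
  - destruct (IH H) as [s [Hs HL]].
    destruct (Rlt_dec a p); [destruct (Rlt_dec p s)|].
    + exists p; split; [lra|]. intros q [<-|Hq]; [lra|]. intros Hc. apply (HL q Hq); lra.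
    + exists s; split; auto. intros q [<-|Hq]; [lra|auto].
    + exists s; split; auto. intros q [<-|Hq]; [lra|auto].
Qed.

(* Locate in the middle of an empty gap to the right of rival j1: rivals j1 and
   j2 flank every voter, so i is never last. *)
Lemma deviation_between_rivals (m : nat) (c : R) (x : nat -> R) (i j1 j2 : nat) :
  (i < m)%nat -> (j1 < m)%nat -> (j2 < m)%nat -> j1 <> i -> j2 <> i ->
  x j1 < x j2 -> 0 <= x j1 -> x j2 <= 1 ->
  exists t, 0 <= t <= 1 /\ 0 < score m c (update x i t) i.
Proof.
  intros Hi H1 H2 N1 N2 H12 Hlo Hhi.
  destruct (exists_empty_gap (map x (seq 0 m)) (x j1) (x j2) H12) as [s [Hs Hgap]].
  set (t := (x j1 + s) / 2). set (r := (s - x j1) / 8).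
  exists t; split; [unfold t; lra|].
  rewrite score_RInt by auto.
  apply (RInt_unit_gt _ 0 1 t (t + r)); try (unfold t, r; lra).
  - apply ex_RInt_payoff; auto.
  - intros y _. apply (payoff_nonneg_of_not_last m c _ i (if Rle_dec t y then j1 else j2)).
    + destruct Rle_dec; auto.
    + unfold Defs.dist. rewrite update_same.
      destruct Rle_dec; rewrite update_other by auto; unfold t in *;
        unfold Rabs; destruct Rcase_abs; destruct Rcase_abs; lra.
  - intros y Hy. rewrite (payoff_first m c _ i j1); auto; [lra|].
    intros k Hk Hki. unfold Defs.dist. rewrite update_same, update_other by auto.
    assert (Hk_out : ~ (x j1 < x k < s)) by (apply Hgap, in_map, in_seq; lia).
    unfold r, t in *. unfold Rabs; destruct Rcase_abs; destruct Rcase_abs; lra.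
Qed.

Lemma deviation_to_cluster (m : nat) (c : R) (x : nat -> R) (i : nat) (q : R) :
  (i < m)%nat -> (forall j, (j < m)%nat -> j <> i -> x j = q) ->
  score m c (update x i q) i = (1 - c) / INR m.
Proof.
  intros Hi Hq. rewrite score_RInt by auto.
  rewrite (RInt_ext _ (fun _ => (1 - c) / INR m)).
  - rewrite RInt_const. unfold scal; simpl; unfold mult; simpl. ring.
  - intros y _. apply payoff_tie; auto. intros j Hj. unfold Defs.dist.
    rewrite update_same. destruct (Nat.eq_dec j i) as [->|ne].
    + rewrite update_same; auto.
    + rewrite update_other, Hq; auto.
Qed.

Lemma Rabs_midpoint_lt (p q y : R) : p <> q ->
  Rabs (q - y) < Rabs ((p + q) / 2 - y) -> Rabs ((p + q) / 2 - y) < Rabs (p - y).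
Proof.
  intros Hpq. rewrite !Rabs_lt_sqr. intros H.
  assert (0 < (q - p) * (q - p)) by (assert (q - p <> 0) by lra; nra).
  assert (((p + q) / 2 - y) * ((p + q) / 2 - y) - (p - y) * (p - y) =
          ((q - y) * (q - y) - ((p + q) / 2 - y) * ((p + q) / 2 - y))
          - (q - p) * (q - p) / 2) by field.
  lra.
Qed.

(* A voter cannot rank the midpoint last in both duels, as it lies between p and q. *)
Lemma duel_midpoint_sum_ge (c p q y : R) : 0 <= c -> p <> q ->
  1 - c <= duel_payoff c (Rabs ((p + q) / 2 - y)) (Rabs (q - y))
           + duel_payoff c (Rabs ((p + q) / 2 - y)) (Rabs (p - y)).
Proof.
  intros Hc Hpq.
  pose proof (Rabs_midpoint_lt p q y Hpq) as Kq.
  pose proof (Rabs_midpoint_lt q p y (not_eq_sym Hpq)) as Kp.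
  replace ((q + p) / 2) with ((p + q) / 2) in Kp by field.
  set (mu := (p + q) / 2) in *.
  destruct (Rlt_dec (Rabs (q - y)) (Rabs (mu - y))) as [Hq|Hq]; [specialize (Kq Hq)|];
  destruct (Rlt_dec (Rabs (p - y)) (Rabs (mu - y))) as [Hp|Hp]; try specialize (Kp Hp);
  unfold duel_payoff; repeat destruct Rlt_dec; lra.
Qed.

Lemma two_midpoint_deviation_gain (c : R) (x : nat -> R) :
  0 <= c -> x 0%nat <> x 1%nat -> 0 <= x 0%nat <= 1 -> 0 <= x 1%nat <= 1 ->
  1 - c < score 2 c (update x 0 ((x 0%nat + x 1%nat) / 2)) 0
          + score 2 c (update x 1 ((x 0%nat + x 1%nat) / 2)) 1.
Proof.
  intros Hc Hpq Hp Hq.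
  set (mu := (x 0%nat + x 1%nat) / 2).
  rewrite !score_RInt by lia.
  rewrite <- (RInt_plus (payoff 2 c (update x 0 mu) 0) (payoff 2 c (update x 1 mu) 1))
    by (apply ex_RInt_payoff; lia).
  assert (Hduel : forall y, plus (payoff 2 c (update x 0 mu) 0 y) (payoff 2 c (update x 1 mu) 1 y)
     = duel_payoff c (Rabs (mu - y)) (Rabs (x 1%nat - y))
       + duel_payoff c (Rabs (mu - y)) (Rabs (x 0%nat - y))).
  { intros y. rewrite (payoff_two c _ 0 1), (payoff_two c _ 1 0) by lia.
    unfold Defs.dist. rewrite !update_same, !update_other by lia. reflexivity. }
  set (r := Rabs (x 0%nat - x 1%nat) / 8).
  assert (Hr : 0 < r) by (apply Rdiv_lt_0_compat; [apply Rabs_pos_lt; lra|lra]).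
  apply (RInt_unit_gt _ (1 - c) (1 + c) mu (mu + r)).
  - apply (ex_RInt_plus (payoff 2 c (update x 0 mu) 0)); apply ex_RInt_payoff; lia.
  - unfold mu; lra.
  - lra.
  - unfold r, mu; unfold Rabs; destruct Rcase_abs; lra.
  - lra.
  - intros y _. rewrite Hduel. apply duel_midpoint_sum_ge; auto.
  - intros y Hy. rewrite Hduel. unfold duel_payoff.
    destruct Rlt_dec as [_|Hn1]; [destruct Rlt_dec as [_|Hn2]; [lra|exfalso; apply Hn2]
                                  |exfalso; apply Hn1];
    unfold r, mu in *; destruct (Rlt_dec (x 0%nat) (x 1%nat));
    unfold Rabs in *; repeat destruct Rcase_abs; lra.
Qed.

(** * Equilibria *)

Lemma tie_score_nonpos (m : nat) (c : R) : 1 <= c -> (0 < m)%nat -> (1 - c) / INR m <= 0.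
Proof.
  intros Hc Hm. assert (0 < / INR m) by (apply Rinv_0_lt_compat, lt_0_INR; auto).
  unfold Rdiv. nra.
Qed.

Lemma two_candidate_equilibrium_convergent (c : R) (x : nat -> R) :
  is_equilibrium 2 c x -> 0 <= c -> x 0%nat = x 1%nat.
Proof.
  intros [Hprof Hbest] Hc. destruct (Req_dec (x 0%nat) (x 1%nat)) as [|Hne]; auto.
  exfalso.
  pose proof (Hprof 0%nat ltac:(lia)). pose proof (Hprof 1%nat ltac:(lia)).
  assert (Hmu : 0 <= (x 0%nat + x 1%nat) / 2 <= 1) by lra.
  pose proof (two_midpoint_deviation_gain c x Hc Hne ltac:(auto) ltac:(auto)).
  pose proof (Hbest 0%nat _ ltac:(lia) Hmu). pose proof (Hbest 1%nat _ ltac:(lia) Hmu).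
  pose proof (sum_scores 2 c x ltac:(lia)) as Hsum. simpl in Hsum. lra.
Qed.

Lemma equilibrium_score_pos (m : nat) (c : R) (x : nat -> R) (i j1 j2 : nat) :
  is_equilibrium m c x -> (i < m)%nat -> (j1 < m)%nat -> (j2 < m)%nat ->
  j1 <> i -> j2 <> i -> x j1 <> x j2 -> 0 < score m c x i.
Proof.
  intros [Hprof Hbest] Hi H1 H2 N1 N2 N12.
  pose proof (Hprof j1 H1). pose proof (Hprof j2 H2).
  destruct (Rlt_dec (x j1) (x j2)).
  - destruct (deviation_between_rivals m c x i j1 j2) as [t [Ht Hpos]]; try lra; auto.
    specialize (Hbest i t Hi Ht). lra.
  - destruct (deviation_between_rivals m c x i j2 j1) as [t [Ht Hpos]]; try lra; auto.
    specialize (Hbest i t Hi Ht). lra.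
Qed.

Lemma equilibrium_score_lb (m : nat) (c : R) (x : nat -> R) (i : nat) :
  is_equilibrium m c x -> 1 <= c -> (2 <= m)%nat -> (i < m)%nat ->
  (1 - c) / INR m <= score m c x i.
Proof.
  intros Heq Hc Hm Hi.
  pose proof (tie_score_nonpos m c Hc ltac:(lia)).
  destruct (classic (exists j1 j2, (j1 < m)%nat /\ (j2 < m)%nat /\ j1 <> i /\ j2 <> i
                                   /\ x j1 <> x j2)) as [[j1 [j2 [? [? [? [? ?]]]]]]|Hcluster].
  - assert (0 < score m c x i) by (apply (equilibrium_score_pos m c x i j1 j2); auto).
    lra.
  - set (k := if Nat.eq_dec i 0 then 1%nat else 0%nat).
    assert (Hk : (k < m)%nat /\ k <> i) by (unfold k; destruct Nat.eq_dec; lia).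
    destruct Hk as [Hk Hki].
    assert (Hq : forall j, (j < m)%nat -> j <> i -> x j = x k).
    { intros j Hj Hji. destruct (Req_dec (x j) (x k)) as [|Hne]; auto.
      exfalso. apply Hcluster. exists j, k; auto. }
    rewrite <- (deviation_to_cluster m c x i (x k)) by auto.
    destruct Heq as [Hprof Hbest]. apply Hbest; auto.
Qed.

Lemma equilibrium_convergent (m : nat) (c : R) (x : nat -> R) (i j : nat) :
  (3 <= m)%nat -> 1 <= c -> is_equilibrium m c x -> (i < m)%nat -> (j < m)%nat ->
  x i = x j.
Proof.
  intros Hm Hc Heq Hi Hj. destruct (Req_dec (x i) (x j)) as [|Hne]; auto. exfalso.
  assert (Hk : exists k, (k < 3)%nat /\ k <> i /\ k <> j).
  { destruct (Nat.eq_dec i 0), (Nat.eq_dec j 0), (Nat.eq_dec i 1), (Nat.eq_dec j 1);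
      first [exists 0%nat; lia | exists 1%nat; lia | exists 2%nat; lia]. }
  destruct Hk as [k [Hk [Hki Hkj]]].
  assert (HmR : 0 < INR m) by (apply lt_0_INR; lia).
  assert (Hgt : INR (length (seq 0 m)) * ((1 - c) / INR m) < Rsum_over (score m c x) (seq 0 m)).
  { apply Rsum_over_gt with k.
    - intros a Ha. apply in_seq in Ha. apply equilibrium_score_lb; auto; lia.
    - apply in_seq; lia.
    - pose proof (equilibrium_score_pos m c x k i j Heq ltac:(lia) Hi Hj
                    (not_eq_sym Hki) (not_eq_sym Hkj) Hne).
      pose proof (tie_score_nonpos m c Hc ltac:(lia)).
      lra. }
  rewrite length_seq, sum_scores in Hgt by lia.
  replace (INR m * ((1 - c) / INR m)) with (1 - c) in Hgt by (field; lra). lra.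
Qed.

Theorem proposition2 (m : nat) (c : R) :
  (2 <= m)%nat -> 1 <= c -> ~ (exists x : nat -> R, is_NCNE m c x).
Proof.
  intros Hm Hc [x [Heq [i [j [Hi [Hj Hij]]]]]]. apply Hij.
  destruct (Nat.eq_dec m 2) as [->|Hm3].
  - pose proof (two_candidate_equilibrium_convergent c x Heq ltac:(lra)).
    destruct i as [|[|]], j as [|[|]]; solve [lia | congruence].
  - apply (equilibrium_convergent m c x); auto; lia.
Qed.
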